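(* Let $a,b,c,n$ be real constants with $a\neq 0$ and $n\neq 0$, and consider on the region of coordinates $(t,r,\phi,z)$ with $r>0$, $\phi$ periodic with period $2\pi$, the Lewis metric of the Weyl class $$ds^{2}=-f\,dt^{2}+2k\,dt\,d\phi+r^{(n^{2}-1)/2}(dr^{2}+dz^{2})+l\,d\phi^{2},$$ where $$f=ar^{1-n}-\frac{c^{2}r^{n+1}}{n^{2}a},\qquad C=\frac{cr^{n+1}}{naf}+b,\qquad k=-Cf,\qquad l=\frac{r^{2}}{f}-C^{2}f .$$ For a constant $\Omega$, introduce the coordinates $\bar{\phi}=\phi-\Omega t$, with $t,r,z$ unchanged. Then: (i) if $bc\neq n$ and $\Omega=c/(n-bc)$, the metric takes the form $$ds^{2}=-\bar{f}\,(dt+\bar{C}\,d\bar{\phi})^{2}+r^{(n^{2}-1)/2}(dr^{2}+dz^{2})+\frac{r^{2}}{\bar{f}}\,d\bar{\phi}^{2},$$ with $\bar{f}=r^{1-n}/\alpha$, $\bar{C}=b\,\frac{n-bc}{n}$ (a constant) and $\alpha=\frac{(n-bc)^{2}}{a n^{2}}$; in this case $\partial_t$ is timelike everywhere when $a>0$; (ii) if $b\neq 0$ and $\Omega=-1/b$, the metric takes the same form with $\bar{f}=r^{1+n}/\alpha$, $\alpha=-ab^{2}$, and $\bar{C}=-b\,\frac{n-bc}{n}$ (a constant); in this case $\partial_t$ is timelike everywhere when $a<0$. Moreover, in both cases, setting $\lambda_{\rm m}=(1-n)/4$ in case (i) and $\lambda_{\rm m}=(1+n)/4$ in case (ii), and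 $j=\tfrac14 b(n-bc)$ in both cases, the metric equals $$ds^{2}=-\frac{r^{4\lambda_{\rm m}}}{\alpha}\Big(dt-\frac{j}{\lambda_{\rm m}-1/4}\,d\bar{\phi}\Big)^{2}+r^{4\lambda_{\rm m}(2\lambda_{\rm m}-1)}(dr^{2}+dz^{2})+\alpha\, r^{2(1-2\lambda_{\rm m})}\,d\bar{\phi}^{2}.$$
   Context: Signature $(-+++)$. The metric is the general stationary cylindrically symmetric vacuum solution (Lewis metric) with all parameters real (Weyl class). The quantity $\lambda_{\rm m}$ is (as computed in the paper) the Komar integral of $\partial_t$ per unit $z$-length in the new coordinates and $j$ the Komar integral of $\partial_\phi$ per unit $z$-length; these interpretations are not needed for the claim. *)

(* concrete reals R, real powers via Rpower (defined for r > 0). *)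
From Stdlib Require Import Reals.
Open Scope R_scope.

Definition lewis_f (a c n r : R) : R :=
  a * Rpower r (1 - n) - c ^ 2 * Rpower r (n + 1) / (n ^ 2 * a).

Definition lewis_C (a b c n r : R) : R :=
  c * Rpower r (n + 1) / (n * a * lewis_f a c n r) + b.

Definition lewis_k (a b c n r : R) : R := - lewis_C a b c n r * lewis_f a c n r.

Definition lewis_l (a b c n r : R) : R :=
  r ^ 2 / lewis_f a c n r - (lewis_C a b c n r) ^ 2 * lewis_f a c n r.

(* line element ds^2 at radius r, evaluated on the coordinate differentials
   (dt, dr, dphi, dz) in the original coordinates (t, r, phi, z) *)
Definition lewis_metric (a b c n r dt dr dphi dz : R) : R :=
  - lewis_f a c n r * dt ^ 2 + 2 * lewis_k a b c n r * dt * dphi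
  + Rpower r ((n ^ 2 - 1) / 2) * (dr ^ 2 + dz ^ 2)
  + lewis_l a b c n r * dphi ^ 2.

(* the same line element expressed in the coordinates (t, r, phibar, z),
   phibar = phi - Om t, so dphi = dphibar + Om dt *)
Definition lewis_metric_rot (a b c n Om r dt dr dphib dz : R) : R :=
  lewis_metric a b c n r dt dr (dphib + Om * dt) dz.

Definition bar_metric (fb Cb n r dt dr dphib dz : R) : R :=
  - fb * (dt + Cb * dphib) ^ 2 + Rpower r ((n ^ 2 - 1) / 2) * (dr ^ 2 + dz ^ 2)
  + r ^ 2 / fb * dphib ^ 2.

Definition komar_metric (alpha lam j r dt dr dphib dz : R) : R :=
  - (Rpower r (4 * lam) / alpha) * (dt - j / (lam - 1 / 4) * dphib) ^ 2
  + Rpower r (4 * lam * (2 * lam - 1)) * (dr ^ 2 + dz ^ 2)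
  + alpha * Rpower r (2 * (1 - 2 * lam)) * dphib ^ 2.

(* The Lewis metric is already of the form -f (dt + C dphi)^2 + r^2/f dphi^2 + ...,
   since k = -C f and l = r^2/f - C^2 f.  The shift dphi = dphibar + Om dt is unimodular on
   the (t, phi) block, so it keeps the determinant -r^2, and the new block is fixed by its
   dt^2 and dt dphibar coefficients, i.e. by f (1 + C Om) and f C.  In terms of
   P = r^(1-n) and Q = r^(1+n), with P Q = r^2,
     f (1 + C Om) = a (1 + b Om) P + c (Om (n - b c) - c) Q / (n^2 a),
   and the two values of Om kill the Q-term (case i) or the P-term (case ii); then fbar is a
   single power of r and Cbar a constant.  The Komar form only renames the exponents. *)

From Stdlib Require Import Reals Lra.
Open Scope R_scope.

Lemma Rpower_gt0 (r x : R) : 0 < Rpower r x.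
Proof. apply exp_pos. Qed.

Lemma Rpower_mul_sqr (r x y : R) : 0 < r -> x + y = 2 ->
  Rpower r x * Rpower r y = r ^ 2.
Proof.
intros hr hxy; rewrite <- Rpower_plus, hxy.
replace 2 with (INR 2) by (simpl; ring).
now apply Rpower_pow.
Qed.

Lemma Rpower_sym_mul (r n : R) : 0 < r ->
  Rpower r (1 - n) * Rpower r (1 + n) = r ^ 2.
Proof. intro hr; apply Rpower_mul_sqr; [exact hr | ring]. Qed.

Lemma pow2_gt0 (x : R) : x <> 0 -> 0 < x ^ 2.
Proof. intro hx; rewrite <- Rsqr_pow2; now apply Rlt_0_sqr. Qed.

Lemma Rdiv_neq0 (x y : R) : x <> 0 -> y <> 0 -> x / y <> 0.
Proof.
intros hx hy; apply Rmult_integral_contrapositive_currified; [exact hx |].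
now apply Rinv_neq_0_compat.
Qed.

Lemma lewis_f_powers (a c n r : R) :
  lewis_f a c n r = a * Rpower r (1 - n) - c ^ 2 * Rpower r (1 + n) / (n ^ 2 * a).
Proof. unfold lewis_f; now rewrite (Rplus_comm n 1). Qed.

Lemma lewis_metric_bar_form (a b c n r dt dr dphi dz : R) : lewis_f a c n r <> 0 ->
  lewis_metric a b c n r dt dr dphi dz
  = bar_metric (lewis_f a c n r) (lewis_C a b c n r) n r dt dr dphi dz.
Proof.
intro hf; unfold lewis_metric, bar_metric, lewis_k, lewis_l.
field; exact hf.
Qed.

Lemma lewis_f_mul_C (a b c n r : R) : a <> 0 -> n <> 0 -> lewis_f a c n r <> 0 ->
  lewis_f a c n r * lewis_C a b c n r
  = c * Rpower r (1 + n) / (n * a) + b * lewis_f a c n r.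
Proof.
intros ha hn hf; unfold lewis_C; rewrite (Rplus_comm n 1).
field; auto.
Qed.

Lemma bar_metric_rot (F K F' K' Om n r dt dr dphib dz : R) : F <> 0 -> F' <> 0 ->
  F * F' = (F + Om * (F * K)) ^ 2 - r ^ 2 * Om ^ 2 ->
  F * (F' * K') = (F + Om * (F * K)) * (F * K) - r ^ 2 * Om ->
  bar_metric F K n r dt dr (dphib + Om * dt) dz = bar_metric F' K' n r dt dr dphib dz.
Proof.
intros hF hF' htt htphi.
assert (hK' : K' = ((F + Om * (F * K)) * (F * K) - r ^ 2 * Om) / (F * F'))
  by (rewrite <- htphi; field; auto).
assert (hF'e : F' = ((F + Om * (F * K)) ^ 2 - r ^ 2 * Om ^ 2) / F)
  by (rewrite <- htt; field; exact hF).
assert (hdet : (F + Om * (F * K)) ^ 2 - (r * Om) ^ 2 <> 0)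
  by (rewrite (Rpow_mult_distr r Om), <- htt; now apply Rmult_integral_contrapositive).
unfold bar_metric; rewrite hK', hF'e.
field; now split.
Qed.

Lemma lewis_metric_rot_pow_1_sub_n (a b c n r dt dr dphib dz : R) :
  a <> 0 -> n <> 0 -> n - b * c <> 0 -> 0 < r -> lewis_f a c n r <> 0 ->
  lewis_metric_rot a b c n (c / (n - b * c)) r dt dr dphib dz
  = bar_metric (Rpower r (1 - n) / ((n - b * c) ^ 2 / (a * n ^ 2))) (b * ((n - b * c) / n))
      n r dt dr dphib dz.
Proof.
intros ha hn hbc hr hf.
unfold lewis_metric_rot; rewrite lewis_metric_bar_form by exact hf.
pose proof (Rpower_gt0 r (1 - n)).
apply bar_metric_rot; [exact hf | | |].
- apply Rdiv_neq0; [lra |].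
  apply Rdiv_neq0; [now apply pow_nonzero |].
  apply Rmult_integral_contrapositive_currified; [exact ha | now apply pow_nonzero].
- rewrite lewis_f_mul_C by auto; rewrite <- (Rpower_sym_mul r n hr), lewis_f_powers.
  field; auto.
- rewrite lewis_f_mul_C by auto; rewrite <- (Rpower_sym_mul r n hr), lewis_f_powers.
  field; auto.
Qed.

Lemma lewis_metric_rot_pow_1_add_n (a b c n r dt dr dphib dz : R) :
  a <> 0 -> n <> 0 -> b <> 0 -> 0 < r -> lewis_f a c n r <> 0 ->
  lewis_metric_rot a b c n (- 1 / b) r dt dr dphib dz
  = bar_metric (Rpower r (1 + n) / (- a * b ^ 2)) (- b * ((n - b * c) / n))
      n r dt dr dphib dz.
Proof.
intros ha hn hb hr hf.
unfold lewis_metric_rot; rewrite lewis_metric_bar_form by exact hf.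
pose proof (Rpower_gt0 r (1 + n)).
apply bar_metric_rot; [exact hf | | |].
- apply Rdiv_neq0; [lra |].
  apply Rmult_integral_contrapositive_currified; [lra | now apply pow_nonzero].
- rewrite lewis_f_mul_C by auto; rewrite <- (Rpower_sym_mul r n hr), lewis_f_powers.
  field; auto.
- rewrite lewis_f_mul_C by auto; rewrite <- (Rpower_sym_mul r n hr), lewis_f_powers.
  field; auto.
Qed.

Lemma komar_metric_bar_form (alpha lam j x K n r dt dr dphib dz : R) :
  0 < r -> alpha <> 0 -> 4 * lam = x -> 4 * lam * (2 * lam - 1) = (n ^ 2 - 1) / 2 ->
  - (j / (lam - 1 / 4)) = K ->
  komar_metric alpha lam j r dt dr dphib dz
  = bar_metric (Rpower r x / alpha) K n r dt dr dphib dz.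
Proof.
intros hr halpha <- hexp <-.
assert (hsplit : Rpower r (2 * (1 - 2 * lam)) * Rpower r (4 * lam) = r ^ 2)
  by (apply Rpower_mul_sqr; [exact hr | ring]).
pose proof (Rpower_gt0 r (4 * lam)).
unfold komar_metric, bar_metric; rewrite hexp, <- hsplit.
set (K := j / (lam - 1 / 4)).
field; split; [exact halpha | lra].
Qed.

Lemma bar_metric_timelike (x alpha K n r : R) : 0 < alpha ->
  bar_metric (Rpower r x / alpha) K n r 1 0 0 0 < 0.
Proof.
intro halpha; pose proof (Rpower_gt0 r x).
assert (0 < Rpower r x / alpha) by now apply Rdiv_lt_0_compat.
unfold bar_metric; unfold Rdiv at 2; ring_simplify; lra.
Qed.

Theorem mainTheorem1 (a b c n : R) (ha : a <> 0) (hn : n <> 0) :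
  (b * c <> n ->
    let Om := c / (n - b * c) in
    let alpha := (n - b * c) ^ 2 / (a * n ^ 2) in
    let Cb := b * ((n - b * c) / n) in
    let fb := fun r => Rpower r (1 - n) / alpha in
    let lam := (1 - n) / 4 in
    let j := 1 / 4 * b * (n - b * c) in
    (forall r dt dr dphib dz, 0 < r -> lewis_f a c n r <> 0 ->
       lewis_metric_rot a b c n Om r dt dr dphib dz
       = bar_metric (fb r) Cb n r dt dr dphib dz)
    /\ (0 < a -> forall r, 0 < r -> bar_metric (fb r) Cb n r 1 0 0 0 < 0)
    /\ (forall r dt dr dphib dz, 0 < r -> lewis_f a c n r <> 0 ->
       lewis_metric_rot a b c n Om r dt dr dphib dz
       = komar_metric alpha lam j r dt dr dphib dz))
  /\
  (b <> 0 ->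
    let Om := - 1 / b in
    let alpha := - a * b ^ 2 in
    let Cb := - b * ((n - b * c) / n) in
    let fb := fun r => Rpower r (1 + n) / alpha in
    let lam := (1 + n) / 4 in
    let j := 1 / 4 * b * (n - b * c) in
    (forall r dt dr dphib dz, 0 < r -> lewis_f a c n r <> 0 ->
       lewis_metric_rot a b c n Om r dt dr dphib dz
       = bar_metric (fb r) Cb n r dt dr dphib dz)
    /\ (a < 0 -> forall r, 0 < r -> bar_metric (fb r) Cb n r 1 0 0 0 < 0)
    /\ (forall r dt dr dphib dz, 0 < r -> lewis_f a c n r <> 0 ->
       lewis_metric_rot a b c n Om r dt dr dphib dz
       = komar_metric alpha lam j r dt dr dphib dz)).
Proof.
split.
- intros hbc Om alpha Cb fb lam j.
  assert (hrot : forall r dt dr dphib dz, 0 < r -> lewis_f a c n r <> 0 ->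
    lewis_metric_rot a b c n Om r dt dr dphib dz = bar_metric (fb r) Cb n r dt dr dphib dz)
    by (intros; apply lewis_metric_rot_pow_1_sub_n; auto; lra).
  split; [exact hrot | split].
  + intros hapos r hr; apply bar_metric_timelike.
    apply Rdiv_lt_0_compat; [apply pow2_gt0; lra |].
    apply Rmult_lt_0_compat; [exact hapos | now apply pow2_gt0].
  + intros r dt dr dphib dz hr hf; rewrite hrot by auto; symmetry.
    apply komar_metric_bar_form;
      [exact hr | | unfold lam; field | unfold lam; field | unfold Cb, j, lam; field; lra].
    apply Rdiv_neq0; [apply pow_nonzero; lra |].
    apply Rmult_integral_contrapositive_currified; [exact ha | now apply pow_nonzero].
- intros hb Om alpha Cb fb lam j.
  assert (hrot : forall r dt dr dphib dz, 0 < r -> lewis_f a c n r <> 0 ->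
    lewis_metric_rot a b c n Om r dt dr dphib dz = bar_metric (fb r) Cb n r dt dr dphib dz)
    by (intros; now apply lewis_metric_rot_pow_1_add_n).
  split; [exact hrot | split].
  + intros haneg r hr; apply bar_metric_timelike.
    apply Rmult_lt_0_compat; [lra | now apply pow2_gt0].
  + intros r dt dr dphib dz hr hf; rewrite hrot by auto; symmetry.
    apply komar_metric_bar_form;
      [exact hr | | unfold lam; field | unfold lam; field | unfold Cb, j, lam; field; lra].
    apply Rmult_integral_contrapositive_currified; [lra | now apply pow_nonzero].
Qed.
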